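(* Let $F:\mathbb R^d\to\mathbb R$ be continuously differentiable with $\|\nabla F(x)-\nabla F(y)\|\le(K_0+K_1\|\nabla F(x)\|)\|x-y\|$ for all $x,y$. Let $\gamma>0$, let $\{m_t\}$ be an arbitrary sequence of nonzero vectors, and let $w_{t+1}=w_t-\gamma\, m_{t+1}/\|m_{t+1}\|$ starting from $w_0$. Define $\delta_t=m_{t+1}-\nabla F(w_t)$. Then for every $t$, $$F(w_{t+1})-F(w_t)\le-\Big(\gamma-\tfrac12K_1\gamma^2\Big)\|\nabla F(w_t)\|+\tfrac12K_0\gamma^2+2\gamma\|\delta_t\|,$$ and consequently, for every $T\ge1$, $$\Big(1-\tfrac12K_1\gamma\Big)\sum_{t=0}^{T-1}\|\nabla F(w_t)\|\le\frac{F(w_0)-F(w_T)}{\gamma}+\tfrac12K_0T\gamma+2\sum_{t=0}^{T-1}\|\delta_t\|.$$ *)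

(* Vectors of R^d are row vectors 'rV[R]_d. *)
From HB Require Import structures.
From mathcomp Require Import all_boot all_order all_algebra.
From mathcomp Require Import all_classical all_reals all_analysis.
Set Implicit Arguments. Unset Strict Implicit. Unset Printing Implicit Defensive.
Import Order.TTheory GRing.Theory Num.Theory.
Import numFieldNormedType.Exports.
Local Open Scope ring_scope.

Definition dotv (R : realType) (d : nat) (u v : 'rV[R]_d) : R :=
  \sum_(i < d) u ord0 i * v ord0 i.

Definition enorm (R : realType) (d : nat) (u : 'rV[R]_d) : R :=
  Num.sqrt (dotv u u).

Definition is_gradient (R : realType) (d : nat)
  (F : 'rV[R]_d -> R) (G : 'rV[R]_d -> 'rV[R]_d) : Prop :=
  forall x, differentiable F x /\ forall h, ('d F x : 'rV[R]_d -> R) h = dotv (G x) h.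

From HB Require Import structures.
From mathcomp Require Import all_boot all_order all_algebra.
From mathcomp Require Import all_classical all_reals all_analysis.
From mathcomp Require Import ring lra.
Set Implicit Arguments. Unset Strict Implicit. Unset Printing Implicit Defensive.
Import Order.TTheory GRing.Theory Num.Theory.
Import numFieldNormedType.Exports.
Local Open Scope ring_scope.

(* A normalized step has length exactly gamma.  Integrating the gradient along
   the segment, (K0,K1)-smoothness gives the descent inequality
   F (x + h) <= F x + <G x, h> + (K0 + K1 |G x|) |h|^2 / 2, so the increase of F
   is at most <G x, step> + (K0 + K1 |G x|) gamma^2 / 2.  Writing m = G x + delta,
   Cauchy-Schwarz and the triangle inequality give
   <G x, -gamma m / |m|> <= - gamma |G x| + 2 gamma |delta|, which is the one-step
   bound; summing it telescopes. *)

Section EuclideanNorm.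
Variables (R : realType) (d : nat).
Implicit Types (u v w : 'rV[R]_d) (a : R).

Lemma dotvC u v : dotv u v = dotv v u.
Proof. by apply: eq_bigr => i _; rewrite mulrC. Qed.

Lemma dotvDl u v w : dotv (u + v) w = dotv u w + dotv v w.
Proof. by rewrite /dotv -big_split; apply: eq_bigr => i _; rewrite mxE mulrDl. Qed.

Lemma dotvZl a u w : dotv (a *: u) w = a * dotv u w.
Proof. by rewrite /dotv mulr_sumr; apply: eq_bigr => i _; rewrite mxE mulrA. Qed.

Lemma dotvZr a u w : dotv w (a *: u) = a * dotv w u.
Proof. by rewrite dotvC dotvZl dotvC. Qed.

Lemma dotvBl u v w : dotv (u - v) w = dotv u w - dotv v w.
Proof. by rewrite dotvDl -scaleN1r dotvZl mulN1r. Qed.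

Lemma dotvBr u v w : dotv w (u - v) = dotv w u - dotv w v.
Proof. by rewrite dotvC dotvBl !(dotvC w). Qed.

Lemma dotv0l w : dotv 0 w = 0.
Proof. by rewrite /dotv big1 // => i _; rewrite mxE mul0r. Qed.

Lemma dotv_ge0 u : 0 <= dotv u u.
Proof. by apply: sumr_ge0 => i _; rewrite -expr2 sqr_ge0. Qed.

Lemma dotv_eq0 u : (dotv u u == 0) = (u == 0).
Proof.
apply/idP/eqP => [|->]; last by rewrite dotv0l.
rewrite psumr_eq0 => [/allP u0|i _]; last by rewrite -expr2 sqr_ge0.
apply/matrixP => i j; rewrite (ord1 i) mxE.
by move: (u0 j (mem_index_enum j)); rewrite mulf_eq0 orbb => /eqP.
Qed.

Lemma enorm_ge0 u : 0 <= enorm u.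
Proof. exact: sqrtr_ge0. Qed.

Lemma enorm_gt0 u : (0 < enorm u) = (u != 0).
Proof. by rewrite sqrtr_gt0 lt_def dotv_ge0 andbT dotv_eq0. Qed.

Lemma sqr_enorm u : enorm u ^+ 2 = dotv u u.
Proof. by rewrite sqr_sqrtr // dotv_ge0. Qed.

Lemma enormZ a u : enorm (a *: u) = `|a| * enorm u.
Proof. by rewrite /enorm dotvZl dotvZr mulrA -expr2 sqrtrM ?sqr_ge0 // sqrtr_sqr. Qed.

Lemma enormN u : enorm (- u) = enorm u.
Proof. by rewrite -scaleN1r enormZ normrN1 mul1r. Qed.

Lemma enorm_distC u v : enorm (u - v) = enorm (v - u).
Proof. by rewrite -enormN opprB. Qed.

Lemma enorm_normalize a u : u != 0 -> enorm ((a / enorm u) *: u) = `|a|.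
Proof.
rewrite -enorm_gt0 => u0.
by rewrite enormZ normrM normfV (gtr0_norm u0) divfK // gt_eqF.
Qed.

Lemma cauchy_schwarz u v : dotv u v <= enorm u * enorm v.
Proof.
have [->|u0] := eqVneq u 0; first by rewrite dotv0l mulr_ge0 ?enorm_ge0.
have [->|v0] := eqVneq v 0; first by rewrite dotvC dotv0l mulr_ge0 ?enorm_ge0.
have := dotv_ge0 (enorm v *: u - enorm u *: v).
rewrite !dotvBl !dotvBr !dotvZl !dotvZr -!sqr_enorm (dotvC v u).
have := enorm_gt0 u; have := enorm_gt0 v; rewrite u0 v0.
set a := enorm u; set b := enorm v; set c := dotv u v => b0 a0 H.
have : 0 <= (a * b) * (a * b - c) by nra.
by rewrite pmulr_rge0 ?mulr_gt0 // subr_ge0.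
Qed.

Lemma ler_enormD u v : enorm (u + v) <= enorm u + enorm v.
Proof.
rewrite -ler_sqr ?nnegrE ?addr_ge0 ?enorm_ge0 // sqr_enorm.
have := cauchy_schwarz u v.
rewrite dotvDl !(dotvC _ (u + v)) !dotvDl (dotvC v u) -!sqr_enorm.
lra.
Qed.

Lemma dotv_normalized_step (gamma : R) u v : 0 <= gamma -> v != 0 ->
  dotv u (- ((gamma / enorm v) *: v)) <= - gamma * enorm u + 2 * gamma * enorm (v - u).
Proof.
move=> gamma0 v0; have n0 : 0 < enorm v by rewrite enorm_gt0.
set n := enorm v; set e := enorm (v - u).
have huv : n ^+ 2 - e * n <= dotv u v.
  have -> : dotv u v = dotv v v - dotv (v - u) v by rewrite dotvBl; ring.
  by rewrite sqr_enorm lerD2l lerN2 cauchy_schwarz.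
have hu : enorm u <= n + e.
  by have := ler_enormD v (- (v - u)); rewrite enormN opprB addrC subrK.
have key : gamma * (enorm u - 2 * e) <= gamma / n * dotv u v.
  apply: le_trans (ler_wpM2l _ huv); last exact: divr_ge0 (ltW n0).
  have -> : gamma / n * (n ^+ 2 - e * n) = gamma * (n - e) by field; rewrite gt_eqF.
  by rewrite ler_wpM2l // lerBlDr; lra.
rewrite -scaleNr dotvZr; lra.
Qed.

End EuclideanNorm.

Section DescentLemma.
Variables (R : realType) (d : nat).
Variables (F : 'rV[R]_d -> R) (G : 'rV[R]_d -> 'rV[R]_d).
Hypothesis hgrad : is_gradient F G.

Lemma is_derive_along_line x h (s : R) :
  is_derive s 1 (fun r : R => F (x + r *: h)) (dotv (G (x + s *: h)) h).
Proof.
pose g : R -> 'rV[R]_d := cst x + ( *:%R ^~ h).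
have dg : is_diff s g (0 + ( *:%R ^~ h)) by exact: is_diffD.
have [dF dFE] := hgrad (g s).
have dp : differentiable (F \o g) s by exact: differentiable_comp.
apply: DeriveDef; first exact/derivable1_diffP.
by rewrite deriveE // diff_comp //= diff_val /= dFE add0r scale1r.
Qed.

Lemma descent_lemma (L : R) x h :
  (forall s, 0 < s < 1 -> enorm (G (x + s *: h) - G x) <= L * s * enorm h) ->
  F (x + h) <= F x + dotv (G x) h + 2^-1 * L * enorm h ^+ 2.
Proof.
move=> hLip.
set a := dotv (G x) h; set k := 2^-1 * L * enorm h ^+ 2.
pose q : R -> R := (a \*: id) + (k \*: (id ^+ 2)).
have dq (r : R) : is_derive r 1 q (a + k * (2 * r)).
  by apply: is_derive_eq; rewrite expr1 /GRing.scale /= !mulr1.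
pose phi := (fun r : R => F (x + r *: h)) - q.
have dphi (r : R) : is_derive r 1 phi (dotv (G (x + r *: h)) h - (a + k * (2 * r))).
  exact: is_deriveB (is_derive_along_line x h r) (dq r).
have : phi 1 <= phi 0.
  apply: (@ler0_derive1_nincr _ phi 0 1) => //; last first.
    by apply: derivable_within_continuous => r _; case: (dphi r).
  move=> r; rewrite in_itv /= => r01; rewrite derive1E derive_val.
  have -> : dotv (G (x + r *: h)) h - (a + k * (2 * r)) =
      dotv (G (x + r *: h) - G x) h - L * r * enorm h * enorm h.
    by rewrite dotvBl -/a /k; field.
  rewrite subr_le0 (le_trans (cauchy_schwarz _ _)) // ler_wpM2r ?enorm_ge0 //.
  exact: hLip.
have phiE r : phi r = F (x + r *: h) - (a * r + k * r ^+ 2) by [].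
rewrite !phiE !scale0r !scale1r addr0 expr1n expr0n /= !mulr0 !mulr1 !addr0 subr0.
lra.
Qed.

Variables K0 K1 : R.
Hypothesis hsmooth : forall x y,
  enorm (G x - G y) <= (K0 + K1 * enorm (G x)) * enorm (x - y).

Lemma descent_lemma_K0K1 x h :
  F (x + h) <= F x + dotv (G x) h + 2^-1 * (K0 + K1 * enorm (G x)) * enorm h ^+ 2.
Proof.
apply: descent_lemma => s /andP[s0 _].
rewrite enorm_distC (le_trans (hsmooth _ _)) //.
by rewrite opprD addNKr enormN enormZ gtr0_norm // mulrA.
Qed.

Lemma normalized_step_decrease (gamma : R) x v :
  0 <= gamma -> v != 0 ->
  F (x - (gamma / enorm v) *: v) - F x <=
    - (gamma - 2^-1 * K1 * gamma ^+ 2) * enorm (G x) + 2^-1 * K0 * gamma ^+ 2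
    + 2 * gamma * enorm (v - G x).
Proof.
move=> gamma0 v0.
have := descent_lemma_K0K1 x (- ((gamma / enorm v) *: v)).
rewrite enormN enorm_normalize // ger0_norm //.
have := dotv_normalized_step (G x) gamma0 v0.
lra.
Qed.

End DescentLemma.

Lemma telescope_affine_le (R : numDomainType) (u b e : nat -> R) (A C D : R) n :
  (forall t, u t.+1 - u t <= - A * b t + C + D * e t) ->
  u n - u 0%N <= - A * \sum_(0 <= t < n) b t + C * n%:R + D * \sum_(0 <= t < n) e t.
Proof.
move=> hu; rewrite -telescope_sumr //; apply: le_trans (ler_sum_nat (fun t _ => hu t)) _.
by rewrite !big_split /= -!mulr_sumr sumr_const_nat subn0 mulr_natr.
Qed.

Theorem lemma3p8 (R : realType) (d : nat)
  (F : 'rV[R]_d -> R) (gradF : 'rV[R]_d -> 'rV[R]_d) (K0 K1 gamma : R)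
  (m w : nat -> 'rV[R]_d)
  (hgrad : is_gradient F gradF)
  (hcont : continuous gradF)
  (hsmooth : forall x y : 'rV[R]_d,
     enorm (gradF x - gradF y) <= (K0 + K1 * enorm (gradF x)) * enorm (x - y))
  (hgamma : 0 < gamma)
  (hm : forall t, m t.+1 != 0)
  (hw : forall t, w t.+1 = w t - (gamma / enorm (m t.+1)) *: m t.+1) :
  let delta := fun t => m t.+1 - gradF (w t) in
  (forall t : nat,
     F (w t.+1) - F (w t) <=
       - (gamma - 2^-1 * K1 * gamma ^+ 2) * enorm (gradF (w t))
       + 2^-1 * K0 * gamma ^+ 2 + 2 * gamma * enorm (delta t))
  /\
  (forall T : nat, (1 <= T)%N ->
     (1 - 2^-1 * K1 * gamma) * (\sum_(0 <= t < T) enorm (gradF (w t))) <=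
       (F (w 0%N) - F (w T)) / gamma + 2^-1 * K0 * T%:R * gamma
       + 2 * \sum_(0 <= t < T) enorm (delta t)).
Proof.
move=> delta.
have step t : F (w t.+1) - F (w t) <=
    - (gamma - 2^-1 * K1 * gamma ^+ 2) * enorm (gradF (w t))
    + 2^-1 * K0 * gamma ^+ 2 + 2 * gamma * enorm (delta t).
  by rewrite hw; exact/(normalized_step_decrease hgrad hsmooth (w t) (ltW hgamma) (hm t)).
split=> // T _.
have hsum := @telescope_affine_le _ (fun t => F (w t)) _ _ _ _ _ T step.
rewrite -(ler_pM2l hgamma) !mulrDr [gamma * (_ / gamma)]mulrC divfK; last by rewrite gt_eqF.
lra.
Qed.
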